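(* Let $G$ be a finite, connected, simple $3$-regular graph on more than $6$ vertices that is $4$-ordered. Then $G$ does not contain a square, i.e. $G$ has no cycle of length $4$.
   Context: A simple graph $G$ is called $k$-ordered if for every sequence $v_1,\ldots,v_k$ of $k$ distinct vertices of $G$ there exists a cycle in $G$ containing these $k$ vertices in the specified (cyclic) order. *)

From mathcomp Require Import all_boot.
Set Implicit Arguments. Unset Strict Implicit. Unset Printing Implicit Defensive.

Definition simple_graph (T : finType) (e : rel T) : Prop :=
  symmetric e /\ irreflexive e.

Definition is_graph_cycle (T : finType) (e : rel T) (c : seq T) : Prop :=
  [/\ 3 <= size c, uniq c & cycle e c].

Definition connected_graph (T : finType) (e : rel T) : Prop :=
  forall x y : T, connect e x y.

Definition regular (T : finType) (e : rel T) (d : nat) : Prop :=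
  forall x : T, #|[set y | e x y]| = d.

Definition k_ordered (T : finType) (e : rel T) (k : nat) : Prop :=
  forall vs : k.-tuple T, uniq vs ->
    exists c : seq T, is_graph_cycle e c /\ exists i, subseq vs (rot i c).

Definition has_square (T : finType) (e : rel T) : Prop :=
  exists c : seq T, is_graph_cycle e c /\ size c = 4.

From mathcomp Require Import all_boot.
Set Implicit Arguments. Unset Strict Implicit. Unset Printing Implicit Defensive.

(* Call u and w twins over p, q when N(u) is contained in {p, q, u'} and N(w) in
   {p, q, w'}.  No cycle visits u, w, u', w' in this cyclic order: the successors
   of u and of w and the predecessor of u lie on three disjoint arcs, none of them
   can be u' or w', so they would be three distinct elements of {p, q}.  Hence in a
   4-ordered cubic graph two non-adjacent twins have the same third neighbour.
   Applied to opposite corners of a square, and then to a corner and the common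
   third neighbour of the other two corners, this either gives some vertex a fourth
   neighbour, or shows that the square plus at most two vertices is closed under
   adjacency, hence by connectivity is the whole graph, which has more than 6
   vertices. *)

Section CycleOrder.

Variables (T : eqType) (e : rel T).

Lemma subseq_cons_split (x : T) s t :
  subseq (x :: s) t -> exists t1 t2, t = t1 ++ x :: t2 /\ subseq s t2.
Proof.
elim: t => [|y t IHt] //=; case: eqP => [<- sub_s_t | _ /IHt[t1 [t2 [-> sub_s_t2]]]].
  by exists [::], t.
by exists (y :: t1), t2.
Qed.

Lemma rot_subseq4 (x1 x2 x3 x4 : T) c :
  subseq [:: x1; x2; x3; x4] c ->
  exists i A B C D, rot i c = x1 :: A ++ x2 :: B ++ x3 :: C ++ x4 :: D.
Proof.
case/subseq_cons_split=> [P [t [-> /subseq_cons_split[A [t1 [-> ]]]]]].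
case/subseq_cons_split=> [B [t2 [-> /subseq_cons_split[C [D [-> _]]]]]].
by exists (size P), A, B, C, (D ++ P); rewrite rot_size_cat -!(catA, cat_cons).
Qed.

Lemma subseq3_cat (x1 x2 x3 : T) s1 s2 s3 :
  x1 \in s1 -> x2 \in s2 -> x3 \in s3 -> subseq [:: x1; x2; x3] (s1 ++ s2 ++ s3).
Proof.
rewrite -!sub1seq => s1x1 s2x2 s3x3.
rewrite -[[:: x1; x2; x3]]/([:: x1] ++ [:: x2] ++ [:: x3]).
by apply: (cat_subseq s1x1); apply: cat_subseq.
Qed.

Lemma uniq3 (x y z : T) : x != y -> x != z -> y != z -> uniq [:: x; y; z].
Proof. by move=> xy xz yz; rewrite /= !inE !negb_or xy xz yz. Qed.

Hypothesis e_sym : symmetric e.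

Lemma no_cycle_through_twins (u w u' w' p q : T) c :
  (forall y, e u y -> y \in [:: p; q; u']) ->
  (forall y, e w y -> y \in [:: p; q; w']) ->
  uniq c -> cycle e c -> ~~ subseq [:: u; w; u'; w'] c.
Proof.
move=> Nu Nw uniq_c cycle_c; apply/negP => /rot_subseq4[i [A [B [X [Y def_c]]]]].
move: uniq_c cycle_c; rewrite -(rot_uniq i) -(rot_cycle i) {}def_c.
set s1 := rcons A w; set s2 := rcons B u'; set s3 := X ++ w' :: Y.
have -> : A ++ w :: B ++ u' :: X ++ w' :: Y = s1 ++ s2 ++ s3 by rewrite !cat_rcons.
move=> /andP[_ uniq_s]; rewrite [cycle _ _]/= rcons_path !cat_path.
case/andP=> /and3P[path_s1 path_s2 _] e_last_u.
set x1 := head w A; set x2 := head u' B; set x3 := last w' Y.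
have eux1 : e u x1 by move: path_s1; rewrite /s1 headI => /andP[].
have ewx2 : e w x2 by move: path_s2; rewrite /s1 last_rcons /s2 headI => /andP[].
have ex3u : e x3 u by move: e_last_u; rewrite !last_cat.
have s1x1 : x1 \in s1 by rewrite [s1]headI mem_head.
have s2x2 : x2 \in s2 by rewrite [s2]headI mem_head.
have s2u' : u' \in s2 by rewrite mem_rcons mem_head.
have s3x3 : x3 \in s3 by rewrite mem_cat mem_last orbT.
have s3w' : w' \in s3 by rewrite mem_cat mem_head orbT.
have uniq_across y1 y2 y3 : y1 \in s1 -> y2 \in s2 -> y3 \in s3 -> uniq [:: y1; y2; y3].
  by move=> *; apply: subseq_uniq uniq_s; apply: subseq3_cat.
have /and3P[] := uniq_across _ _ _ s1x1 s2u' s3x3.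
rewrite !inE !negb_or => /andP[x1u' _] u'x3 _.
have /and3P[] := uniq_across _ _ _ s1x1 s2x2 s3w'.
rewrite !inE !negb_or => _ x2w' _.
have pq_x1 : x1 \in [:: p; q] by move: (Nu _ eux1); rewrite !inE (negbTE x1u') orbF.
have pq_x2 : x2 \in [:: p; q] by move: (Nw _ ewx2); rewrite !inE (negbTE x2w') orbF.
have pq_x3 : x3 \in [:: p; q].
  by move: (Nu _ (etrans (e_sym _ _) ex3u)); rewrite !inE (eq_sym x3 u') (negbTE u'x3) orbF.
suff : size [:: x1; x2; x3] <= size [:: p; q] by [].
apply: (uniq_leq_size (uniq_across _ _ _ s1x1 s2x2 s3x3)).
by apply/allP; rewrite /= pq_x1 pq_x2 pq_x3.
Qed.

End CycleOrder.

Section CubicFourOrdered.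

Variables (T : finType) (e : rel T).

Lemma is_graph_cycle_rot n c : is_graph_cycle e c -> is_graph_cycle e (rot n c).
Proof. by case=> size_c uniq_c cycle_c; split; rewrite ?size_rot ?rot_uniq ?rot_cycle. Qed.

Hypotheses (e_sym : symmetric e) (e_irr : irreflexive e) (e_cubic : regular e 3).

Lemma adj_neq x y : e x y -> x != y.
Proof. by apply: contraTneq => ->; rewrite e_irr. Qed.

Lemma cubic_nbhs x p q r :
  uniq [:: p; q; r] -> e x p -> e x q -> e x r -> forall y, e x y -> y \in [:: p; q; r].
Proof.
move=> uniq_pqr exp exq exr y exy; apply/negPn/negP => y_new.
suff : 4 <= #|[set z | e x z]| by rewrite e_cubic.
apply/card_geqP; exists [:: y; p; q; r]; split; rewrite /= ?y_new //.
by move=> z; rewrite !inE => /or4P[]/eqP->.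
Qed.

Lemma cubic_third_nbr x p q : e x p -> e x q -> p != q ->
  exists y, [/\ e x y, y \notin [:: p; q] & forall z, e x z -> z \in [:: p; q; y]].
Proof.
move=> exp exq pq.
have [y /andP[exy y_new] | no_third] := pickP [pred y | e x y & y \notin [:: p; q]].
  exists y; split=> //; apply: cubic_nbhs => //.
  move: y_new; rewrite /= !inE !negb_or pq => /andP[yp yq].
  by rewrite ![_ == y]eq_sym yp yq.
suff : #|[set z | e x z]| <= size [:: p; q] by rewrite e_cubic.
apply: leq_trans (card_size _); apply/subset_leq_card/subsetP => z.
by rewrite inE => exz; move: (no_third z); rewrite /= exz => /negbFE.
Qed.

Hypothesis e_conn : connected_graph e.

Lemma connected_closed_card s x0 :
  x0 \in s -> (forall x y, x \in s -> e x y -> y \in s) -> #|T| <= size s.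
Proof.
move=> s_x0 s_closed.
have s_clos : closed e s.
  by apply: (intro_closed (sym_connect_sym e_sym)) => x y exy /s_closed; apply.
apply: leq_trans (card_size s); apply/subset_leq_card/subsetP => y _.
by rewrite -(closed_connect s_clos (e_conn x0 y)).
Qed.

Hypothesis e_ko : k_ordered e 4.

Lemma k4_ordered_no_twins u w u' w' p q :
  uniq [:: u; w; u'; w'] ->
  (forall y, e u y -> y \in [:: p; q; u']) ->
  (forall y, e w y -> y \in [:: p; q; w']) -> False.
Proof.
move=> uniq4 Nu Nw.
have [c [[_ uniq_c cycle_c] [i sub]]] := e_ko (uniq4 : uniq [tuple u; w; u'; w']).
by apply: (negP (no_cycle_through_twins e_sym Nu Nw _ _)) sub; rewrite (rot_uniq, rot_cycle).
Qed.

Lemma twins_third_nbr_eq u w u' w' p q :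
  u != w -> ~~ e u w -> e u u' -> e w w' ->
  (forall y, e u y -> y \in [:: p; q; u']) ->
  (forall y, e w y -> y \in [:: p; q; w']) -> u' = w'.
Proof.
move=> uw n_euw euu' eww' Nu Nw; case: (eqVneq u' w') => // u'w'.
have uw' : u != w' by apply: contraNneq n_euw => ->; rewrite e_sym.
have wu' : w != u' by apply: contraNneq n_euw => ->.
case: (k4_ordered_no_twins _ Nu Nw).
by rewrite /= !inE !negb_or uw uw' wu' u'w' (adj_neq euu') (adj_neq eww').
Qed.

Hypothesis e_big : 6 < #|T|.

Lemma square_no_diagonal a b c d : is_graph_cycle e [:: a; b; c; d] -> ~~ e a c.
Proof.
case=> _; rewrite /= !inE !negb_or => /and4P[/and3P[ab ac ad] /andP[bc bd] cd _].
have [ba da cb dc] : [/\ b != a, d != a, c != b & d != c] by split; rewrite eq_sym.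
case/and5P=> eab ebc ecd eda _; apply/negP => eac.
have [eba ecb edc ead eca] : [/\ e b a, e c b, e d c, e a d & e c a].
  by split; rewrite e_sym.
have Na := cubic_nbhs (uniq3 bd bc dc) eab ead eac.
have Nc := cubic_nbhs (uniq3 bd ba da) ecb ecd eca.
case: (boolP (e b d)) => [ebd | n_ebd].
  have Nb := cubic_nbhs (uniq3 ac ad cd) eba ebc ebd.
  have Nd := cubic_nbhs (uniq3 ac ab cb) eda edc (etrans (e_sym _ _) ebd).
  suff : #|T| <= size [:: a; b; c; d] by move/(leq_trans e_big).
  apply: (connected_closed_card (mem_head a _)) => x y.
  rewrite !inE => /or4P[]/eqP->; [move/Na | move/Nb | move/Nc | move/Nd];
    by rewrite !inE => /or3P[]/eqP->; rewrite eqxx ?orbT.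
have [x [ebx x_ac Nb]] := cubic_third_nbr eba ebc ac.
have [x' [edx' _ Nd]] := cubic_third_nbr eda edc ac.
have {x' edx' Nd} edx : e d x by rewrite (twins_third_nbr_eq bd n_ebd ebx edx' Nb Nd).
move: x_ac; rewrite !inE negb_or => /andP[xa xc].
have xb : x != b by rewrite eq_sym (adj_neq ebx).
have xd : x != d by apply: contraNneq n_ebd => <-.
have [y [exy _ Nx]] := cubic_third_nbr (etrans (e_sym _ _) ebx) (etrans (e_sym _ _) edx) bd.
have n_eax : ~~ e a x by apply/negP => /Na; rewrite !inE (negbTE xb) (negbTE xd) (negbTE xc).
have ax : a != x by rewrite eq_sym.
have c_y := twins_third_nbr_eq ax n_eax eac exy Na Nx.
have ecx : e c x by rewrite e_sym c_y.
by move/Nc: ecx; rewrite !inE (negbTE xb) (negbTE xd) (negbTE xa).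
Qed.

Lemma square_has_diagonal a b c d : is_graph_cycle e [:: a; b; c; d] -> e a c || e b d.
Proof.
case=> _; rewrite /= !inE !negb_or => /and4P[/and3P[ab ac ad] /andP[bc bd] cd _].
have [ba da cb db dc] : [/\ b != a, d != a, c != b, d != b & d != c] by split; rewrite eq_sym.
case/and5P=> eab ebc ecd eda _; apply: contraT => /norP[n_eac n_ebd].
have [eba ecb edc ead] : [/\ e b a, e c b, e d c & e a d] by split; rewrite e_sym.
have [x [eax x_bd Na]] := cubic_third_nbr eab ead bd.
have [x' [ecx _ Nc]] := cubic_third_nbr ecb ecd bd.
have x'x := twins_third_nbr_eq ac n_eac eax ecx Na Nc; subst x'.
have [z [ebz z_ac Nb]] := cubic_third_nbr eba ebc ac.
have [z' [edz _ Nd]] := cubic_third_nbr eda edc ac.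
have z'z := twins_third_nbr_eq bd n_ebd ebz edz Nb Nd; subst z'.
move: x_bd z_ac; rewrite !inE !negb_or => /andP[xb xd] /andP[za zc].
have [exa ezb exc ezd] : [/\ e x a, e z b, e x c & e z d] by split; rewrite e_sym.
have xz : x != z.
  apply/eqP => x_z; subst z; have := cubic_nbhs (uniq3 ab ac bc) exa ezb exc ezd.
  by rewrite !inE (negbTE da) (negbTE db) (negbTE dc).
have [y [ezy _ Nz]] := cubic_third_nbr ezb ezd bd.
have [az cz] : a != z /\ c != z by rewrite !(eq_sym _ z).
have [zb zd] : z != b /\ z != d by rewrite eq_sym (adj_neq ebz) eq_sym (adj_neq edz).
have n_eaz : ~~ e a z.
  by apply/negP => /Na; rewrite !inE (negbTE zb) (negbTE zd) eq_sym (negbTE xz).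
have x_y := twins_third_nbr_eq az n_eaz eax ezy Na Nz; subst y.
have Nx := cubic_nbhs (uniq3 ac az cz) exa exc (etrans (e_sym _ _) ezy).
suff : #|T| <= size [:: a; b; c; d; x; z] by move/(leq_trans e_big).
apply: (connected_closed_card (mem_head a _)) => v w.
rewrite !inE => /orP[|/orP[|/orP[|/orP[|/orP[|]]]]] /eqP->;
  [move/Na | move/Nb | move/Nc | move/Nd | move/Nx | move/Nz];
  by rewrite !inE => /or3P[]/eqP->; rewrite eqxx ?orbT.
Qed.

End CubicFourOrdered.

Theorem theorem2p1 (T : finType) (e : rel T) :
  simple_graph e -> connected_graph e -> regular e 3 -> 6 < #|T| ->
  k_ordered e 4 -> ~ has_square e.
Proof.
move=> [e_sym e_irr] e_conn e_cubic e_big e_ko [[|a [|b [|c [|d [|? ?]]]]] [square]] // _.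
have no_diagonal := square_no_diagonal e_sym e_irr e_cubic e_conn e_ko e_big.
case/orP: (square_has_diagonal e_sym e_irr e_cubic e_conn e_ko e_big square); apply/negP.
  exact: no_diagonal square.
exact: no_diagonal (is_graph_cycle_rot 1 square).
Qed.
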